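(* Let $\alpha,\tau\in C^{\log}_{\mathrm{loc}}$ with $\tau^-\ge0$, let $p,q\in\mathcal{P}^{\log}_0$ with $0<q^+<\infty$. There exists $c>0$ such that for all $\lambda\in\mathfrak{b}^{\alpha(\cdot),\tau(\cdot)}_{p(\cdot),q(\cdot)}$, all $v\in\mathbb{N}_0$, $m\in\mathbb{Z}^n$ and $x\in Q_{v,m}$, $$|\lambda_{v,m}|\le c\,2^{-v(\alpha(x)+\frac n2)}|Q_{v,m}|^{\tau(x)}\,\|\lambda\|_{\mathfrak{b}^{\alpha(\cdot),\tau(\cdot)}_{p(\cdot),q(\cdot)}}\,\|\chi_{v,m}\|_{p(\cdot)}^{-1}.$$
   Context: $g^\pm$: essential sup/inf. $\mathcal{P}_0$: measurable $p:\mathbb{R}^n\to(0,\infty)$ with $p^->0$. $g\in C^{\log}_{\mathrm{loc}}$: $|g(x)-g(y)|\le c/\log(e+1/|x-y|)$; $g\in C^{\log}$: additionally $|g(x)-g_\infty|\le c/\log(e+|x|)$. $\mathcal{P}_0^{\log}=\{p\in\mathcal{P}_0:1/p\in C^{\log}\}$. $\|f\|_{p(\cdot)}=\inf\{\lambda>0:\int|f/\lambda|^{p(x)}dx\le1\}$; $\|(f_v)\|_{\ell^{q(\cdot)}(L^{p(\cdot)})}=\inf\{\mu>0:\sum_v\inf\{\lambda_v>0:\int|f_v(x)/(\mu\lambda_v^{1/q(x)})|^{p(x)}dx\le1\}\le1\}$. Dyadic cubes $Q_{v,m}=\{x:m_i\le2^vx_i<m_i+1\}$, $\chi_{v,m}=\chi_{Q_{v,m}}$,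 $\mathcal{Q}$ the set of dyadic cubes, $v_P=-\log_2l(P)$, $v_P^+=\max(v_P,0)$. For complex sequences $\lambda=\{\lambda_{v,m}:v\in\mathbb{N}_0,m\in\mathbb{Z}^n\}$, $\|\lambda\|_{\mathfrak{b}^{\alpha(\cdot),\tau(\cdot)}_{p(\cdot),q(\cdot)}}=\sup_{P\in\mathcal{Q}}\Big\|\Big(|P|^{-\tau(\cdot)}\chi_P\sum_{m\in\mathbb{Z}^n}2^{v(\alpha(\cdot)+n/2)}\lambda_{v,m}\chi_{v,m}\Big)_{v\ge v_P^+}\Big\|_{\ell^{q(\cdot)}(L^{p(\cdot)})}$ and $\mathfrak{b}^{\alpha(\cdot),\tau(\cdot)}_{p(\cdot),q(\cdot)}$ is the set of $\lambda$ where this is finite. *)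

From mathcomp Require Import all_boot all_order all_algebra.
From mathcomp Require Import all_classical all_reals all_analysis.
From mathcomp Require Import complex.
Import Order.TTheory GRing.Theory Num.Theory.

Set Implicit Arguments.
Unset Strict Implicit.
Unset Printing Implicit Defensive.

Local Open Scope classical_set_scope.
Local Open Scope ring_scope.

(* Lebesgue integral over R^n of a nonnegative extended-real function,
   written as the iterated one-dimensional Lebesgue integral (by Tonelli this
   is the n-dimensional Lebesgue integral for every measurable integrand). *)
Fixpoint iint (R : realType) (n : nat) : (n.-tuple R -> \bar R) -> \bar R :=
  match n return (n.-tuple R -> \bar R) -> \bar R with
  | 0 => fun f => f [tuple]
  | k.+1 => fun f =>
      (\int[@lebesgue_measure R]_(t in setT)
          iint (fun y : k.-tuple R => f (cons_tuple t y)))%E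
  end.

Definition lebn (R : realType) (n : nat) (A : set (n.-tuple R)) : \bar R :=
  iint (fun x => (\1_A x)%:E).

Definition nullset (R : realType) (n : nat) (A : set (n.-tuple R)) : Prop :=
  exists B : set (n.-tuple R), measurable B /\ A `<=` B /\ lebn B = 0%E.

Definition esssup (R : realType) (n : nat) (f : n.-tuple R -> R) : \bar R :=
  ereal_inf [set y : \bar R | nullset [set x | y < (f x)%:E]%E].
Definition essinf (R : realType) (n : nat) (f : n.-tuple R -> R) : \bar R :=
  ereal_sup [set y : \bar R | nullset [set x | ((f x)%:E < y)%E]].

Definition enorm (R : realType) (n : nat) (x : n.-tuple R) : R :=
  Num.sqrt (\sum_(i < n) (tnth x i) ^+ 2).

Definition tsub (R : realType) (n : nat) (x y : n.-tuple R) : n.-tuple R :=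
  [tuple tnth x i - tnth y i | i < n].

Definition Clog_loc (R : realType) (n : nat) (g : n.-tuple R -> R) : Prop :=
  exists c : R, forall x y : n.-tuple R,
    `|g x - g y| <= c / ln (expR 1 + (enorm (tsub x y))^-1).

Definition Clog (R : realType) (n : nat) (g : n.-tuple R -> R) : Prop :=
  exists c : R, exists ginf : R,
    (forall x y : n.-tuple R,
      `|g x - g y| <= c / ln (expR 1 + (enorm (tsub x y))^-1)) /\
    (forall x : n.-tuple R, `|g x - ginf| <= c / ln (expR 1 + enorm x)).

Definition P0 (R : realType) (n : nat) (p : n.-tuple R -> R) : Prop :=
  measurable_fun setT p /\ (forall x, 0 < p x) /\ (0 < essinf p)%E.

Definition P0log (R : realType) (n : nat) (p : n.-tuple R -> R) : Prop :=
  P0 p /\ Clog (fun x => (p x)^-1).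

Definition dcube (R : realType) (n : nat) (j : int) (m : n.-tuple int)
  : set (n.-tuple R) :=
  [set x | forall i : 'I_n,
     (tnth m i)%:~R <= (2 : R) ^ j * tnth x i < (tnth m i)%:~R + 1].

Definition dvol (R : realType) (n : nat) (j : int) : R := ((2 : R) ^ (- j)) ^+ n.

Definition vplus (j : int) : nat := `|Num.max j 0|%N.

Definition pnorm (R : realType) (n : nat) (p : n.-tuple R -> R)
  (f : n.-tuple R -> R) : \bar R :=
  ereal_inf [set l%:E | l in [set l : R | 0 < l /\
     (iint (fun x => ((`|f x / l|) `^ (p x))%:E) <= 1)%E]].

Definition lqLp_inner (R : realType) (n : nat) (p q : n.-tuple R -> R)
  (f : n.-tuple R -> R) (mu : R) : \bar R :=
  ereal_inf [set l%:E | l in [set l : R | 0 < l /\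
     (iint (fun x => ((`|f x / (mu * l `^ (q x)^-1)|) `^ (p x))%:E) <= 1)%E]].

Definition lqLp_norm (R : realType) (n : nat) (p q : n.-tuple R -> R)
  (f : nat -> n.-tuple R -> R) (v0 : nat) : \bar R :=
  ereal_inf [set mu%:E | mu in [set mu : R | 0 < mu /\
     (\sum_(v0 <= v <oo) lqLp_inner p q (f v) mu <= 1)%E]].

Definition cseq (R : realType) (n : nat) := nat -> n.-tuple int -> R[i].

Definition cabs (R : realType) (z : R[i]) : R := ComplexField.Normc.normc z.

(* the function |P|^{-tau(x)} chi_P(x) sum_m 2^{v(alpha(x)+n/2)} lambda_{v,m} chi_{v,m}(x),
   taken in absolute value (only its modulus enters the quasinorm) *)
Definition bfun (R : realType) (n : nat) (alpha tau : n.-tuple R -> R)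
  (lam : cseq R n) (j : int) (k : n.-tuple int) (v : nat) (x : n.-tuple R) : R :=
  (@dvol R n j) `^ (- tau x) * \1_(dcube j k) x *
  cabs (\sum_(m \in [set: n.-tuple int])
          real_complex R ((2 : R) `^ (v%:R * (alpha x + n%:R / 2))) * lam v m
          * real_complex R (\1_(@dcube R n v%:Z m) x)).

Definition bnorm (R : realType) (n : nat) (alpha tau p q : n.-tuple R -> R)
  (lam : cseq R n) : \bar R :=
  ereal_sup [set lqLp_norm p q (bfun alpha tau lam jk.1 jk.2) (vplus jk.1)
            | jk in [set: int * n.-tuple int]].

(* On a dyadic cube [Q = Q_{v,m}] the level-[v] function of the quasinorm,
   localized to [P = Q], equals [|lambda_{v,m}| w_v(y)] with the weight
   [w_v(y) = |Q|^{-tau(y)} 2^{v(alpha(y)+n/2)}].  Since [|x - y| <= sqrt n 2^-v]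
   on [Q], the log-Hoelder modulus [1/ln(e + 1/|x - y|)] is [O(1/v)] there, so
   [v |g(x) - g(y)|] is bounded for [g = alpha, tau] and [w_v(x) <= C w_v(y)].
   Hence [|lambda_{v,m}| w_v(x) chi_Q] is pointwise at most [C] times that
   function, whose [L^{p(.)}] norm is at most [2^{sup 1/q}] times its
   [l^{q(.)}(L^{p(.)})] norm, itself at most [||lambda||].  Dividing by
   [||chi_Q||_{p(.)}], which is positive because [p] is bounded below by
   [1/sup(1/p) > 0], gives the bound. *)

From mathcomp Require Import all_boot all_order all_algebra.
From mathcomp Require Import all_classical all_reals all_analysis.
From mathcomp Require Import complex.
From mathcomp Require Import ring lra measurable_realfun.

Set Implicit Arguments.
Unset Strict Implicit.
Unset Printing Implicit Defensive.

Import Order.TTheory GRing.Theory Num.Theory.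
Local Open Scope classical_set_scope.
Local Open Scope ring_scope.

Section iterated_integral.
Variable R : realType.

Lemma ge0_le_integralT d (T : measurableType d) (mu : measure T R)
    (f g : T -> \bar R) :
  (forall x, 0 <= f x)%E -> (forall x, f x <= g x)%E ->
  (\int[mu]_x f x <= \int[mu]_x g x)%E.
Proof.
move=> f0 fg; have g0 x : (0 <= g x)%E by exact: le_trans (f0 x) (fg x).
rewrite !ge0_integralTE //; apply: ereal_sup_le => _ [h hf <-].
by exists h => // x; exact: le_trans (hf x) (fg x).
Qed.

Lemma iint_ge0 n (f : n.-tuple R -> \bar R) :
  (forall x, 0 <= f x)%E -> (0 <= iint f)%E.
Proof.
elim: n f => [|n IH] f f0 /=; first exact: f0.
by apply: integral_ge0 => t _; exact: IH.
Qed.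

Lemma le_iint n (f g : n.-tuple R -> \bar R) :
  (forall x, 0 <= f x)%E -> (forall x, f x <= g x)%E -> (iint f <= iint g)%E.
Proof.
elim: n f g => [|n IH] f g f0 fg /=; first exact: fg.
by apply: ge0_le_integralT => t; [exact: iint_ge0 | exact: IH].
Qed.

End iterated_integral.

Section dyadic_cubes.
Variable R : realType.

Definition dinterval (j k : int) : set R :=
  [set t | k%:~R <= 2 ^ j * t < k%:~R + 1].

Lemma dintervalE j k :
  dinterval j k = `[k%:~R / 2 ^ j, (k%:~R + 1) / 2 ^ j[%classic.
Proof.
have h2j : (0 : R) < 2 ^ j by rewrite exprz_gt0.
apply/seteqP; split => t; rewrite /dinterval /= in_itv /=;
  by rewrite ler_pdivrMr // ltr_pdivlMr // ![t * _]mulrC.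
Qed.

Lemma measurable_dinterval j k : measurable (dinterval j k).
Proof. by rewrite dintervalE; exact: measurable_itv. Qed.

Lemma lebesgue_measure_dinterval j k :
  lebesgue_measure (dinterval j k) = (2 ^ (- j) : R)%:E.
Proof.
have h2j : (0 : R) < 2 ^ j by rewrite exprz_gt0.
rewrite dintervalE lebesgue_measure_itv /= lte_fin ltr_pM2r ?invr_gt0 //.
by rewrite ltrDl ltr01 -EFinD -invr_expz -mulrBl addrAC subrr add0r mul1r.
Qed.

Lemma dcube_cons n j k0 (k : n.-tuple int) t (y : n.-tuple R) :
  dcube j [tuple of k0 :: k] [tuple of t :: y] <->
  dinterval j k0 t /\ dcube j k y.
Proof.
split=> [hc|[ht hy] i].
  split; first by have := hc ord0; rewrite !tnth0.
  by move=> i; have := hc (lift ord0 i); rewrite !tnthS.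
by case: (unliftP ord0 i) => [i' ->|->]; rewrite ?tnthS ?tnth0.
Qed.

Lemma indic_dcube_cons n j k0 (k : n.-tuple int) t (y : n.-tuple R) :
  \1_(dcube j [tuple of k0 :: k]) [tuple of t :: y] =
  \1_(dinterval j k0) t * \1_(dcube j k) y :> R.
Proof.
rewrite !indicE; have := dcube_cons j k0 k t y.
case: (pselect (dinterval j k0 t)) => ht; case: (pselect (dcube j k y)) => hy hc.
- by rewrite !mem_set ?mulr1 //; apply/hc.
- by rewrite (memNset hy) mulr0 memNset // => /hc[].
- by rewrite (memNset ht) mul0r memNset // => /hc[].
- by rewrite (memNset ht) mul0r memNset // => /hc[].
Qed.

Lemma iint_indic_dcube n j (k : n.-tuple int) (a : R) : 0 <= a ->
  iint (fun x => (a * \1_(dcube j k) x)%:E) = (a * dvol R n j)%:E.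
Proof.
rewrite /dvol; elim: n k a => [|n IH] k a a0 /=.
  by rewrite indicE mem_set ?expr0 // => -[].
case/tupleP: k => k0 k; have h2j : (0 : R) <= 2 ^ (- j) by rewrite exprz_ge0.
transitivity (\int[lebesgue_measure]_(t in setT)
    ((a * (2 ^ (- j)) ^+ n)%:E * (\1_(dinterval j k0) t)%:E))%E.
  apply: eq_integral => t _; rewrite -EFinM; under eq_fun do
    rewrite indic_dcube_cons mulrA.
  rewrite IH; first by rewrite mulrAC.
  by rewrite mulr_ge0 // indicE ler0n.
rewrite ge0_integralZl_EFin ?mulr_ge0 ?exprn_ge0 //; last first.
  by apply/measurable_EFinP/measurable_indic; exact: measurable_dinterval.
rewrite integral_indic ?setIT //; last exact: measurable_dinterval.
transitivity ((a * (2 ^ (- j)) ^+ n)%:E * (2 ^ (- j) : R)%:E)%E.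
  by congr (_ * _)%E; exact: lebesgue_measure_dinterval.
by rewrite -EFinM exprS; congr EFin; ring.
Qed.

Lemma dcube_uniq n j (k k' : n.-tuple int) (y : n.-tuple R) :
  dcube j k y -> dcube j k' y -> k = k'.
Proof.
move=> hk hk'; apply: eq_from_tnth => i.
have /andP[a1 a2] := hk i; have /andP[b1 b2] := hk' i.
apply/eqP; rewrite eq_le -!ltzD1 -!(ltr_int R) !intrD.
by rewrite (le_lt_trans b1 a2) (le_lt_trans a1 b2).
Qed.

Lemma dcube_dist n j (k : n.-tuple int) (x y : n.-tuple R) i :
  dcube j k x -> dcube j k y -> `|tnth x i - tnth y i| < 2 ^ (- j).
Proof.
move=> hx hy; have /andP[a1 a2] := hx i; have /andP[b1 b2] := hy i.
have h2j : (0 : R) < 2 ^ j by rewrite exprz_gt0.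
rewrite -invr_expz -[_ < _^-1](ltr_pM2l h2j) mulfV ?gt_eqF //.
rewrite -[X in X * _]ger0_norm ?ltW // -normrM ltr_norml mulrBr.
apply/andP; split; lra.
Qed.

Lemma dvol_gt0 n j : 0 < dvol R n j.
Proof. by rewrite /dvol exprn_gt0 // exprz_gt0. Qed.

End dyadic_cubes.

Section log_Hoelder.
Variable R : realType.

Lemma enorm_tsub_sqr n (x y : n.-tuple R) :
  enorm (tsub x y) ^+ 2 = \sum_(i < n) (tnth x i - tnth y i) ^+ 2.
Proof.
rewrite sqr_sqrtr; last by apply: sumr_ge0 => i _; exact: sqr_ge0.
by apply: eq_bigr => i _; rewrite tnth_mktuple.
Qed.

Lemma enorm_tsub_eq0 n (x y : n.-tuple R) : enorm (tsub x y) = 0 -> x = y.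
Proof.
move=> d0; have /eqP := enorm_tsub_sqr x y; rewrite d0 expr0n eq_sym.
rewrite psumr_eq0 => [/allP hxy|i _]; last exact: sqr_ge0.
apply: eq_from_tnth => i; have /implyP := hxy i (mem_index_enum i).
by rewrite sqrf_eq0 subr_eq0 => /(_ isT)/eqP.
Qed.

Lemma dcube_enorm_sqr n j (k : n.-tuple int) (x y : n.-tuple R) :
  dcube j k x -> dcube j k y -> enorm (tsub x y) ^+ 2 <= n%:R * (2 ^ (- j)) ^+ 2.
Proof.
move=> hx hy; rewrite enorm_tsub_sqr.
apply: le_trans (_ : _ <= \sum_(i < n) (2 ^ (- j)) ^+ 2) _; last first.
  by rewrite sumr_const card_ord mulr_natl.
apply: ler_sum => i _; rewrite -real_normK ?num_real // !expr2.
by have /ltW h := dcube_dist i hx hy; rewrite ler_pM.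
Qed.

Lemma ln_expR1D_ge1 (z : R) : 0 <= z -> 1 <= ln (expR 1 + z).
Proof.
move=> z0; rewrite -{1}(expRK 1) ler_ln ?posrE ?expR_gt0 ?lerDl //.
by rewrite ltr_wpDr ?expR_gt0.
Qed.

Lemma dyadic_level_le_ln (n v : nat) (d : R) : 0 < d ->
  d ^+ 2 <= n%:R * (2 ^ (- v%:Z)) ^+ 2 ->
  v%:R * ln 4 <= ln n%:R + 2 * ln (expR 1 + d^-1).
Proof.
move=> d0 hd; have h4v : (0 : R) < 4 ^+ v by rewrite exprn_gt0.
have hd' : d ^+ 2 * 4 ^+ v <= n%:R.
  rewrite -invr_expz /= exprVn -exprM mulnC exprM -natrX /= in hd.
  by rewrite ler_pdivlMr in hd.
have n0 : (0 : R) < n%:R by apply: lt_le_trans hd'; rewrite mulr_gt0 ?exprn_gt0.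
move: hd'; rewrite -ler_ln ?posrE ?mulr_gt0 ?exprn_gt0 //.
rewrite lnM ?posrE ?exprn_gt0 // !lnXn // -(mulr_natr (ln d)) -(mulr_natr (ln 4)).
move=> hln.
have : - ln d <= ln (expR 1 + d^-1).
  by rewrite -lnV ?posrE // ler_ln ?posrE ?addr_gt0 ?invr_gt0 ?expR_gt0 // lerDr expR_ge0.
lra.
Qed.

Lemma Clog_loc_dcube n (g : n.-tuple R -> R) : Clog_loc g ->
  exists C, forall (v : nat) k (x y : n.-tuple R),
    dcube v%:Z k x -> dcube v%:Z k y -> v%:R * (g x - g y) <= C.
Proof.
case=> c hg; exists (`|c| * (2 + ln n%:R) / ln 4) => v k x y hx hy.
have ln4 : (0 : R) < ln 4 by rewrite ln_gt0 // ltr1n.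
have lnn : (0 : R) <= ln n%:R.
  by case: n {g hg k x y hx hy} => [|n]; [rewrite ln0 | apply: ln_ge0; rewrite ler1n].
have [/enorm_tsub_eq0 ->|d0] := eqVneq (enorm (tsub x y)) 0.
  by rewrite subrr mulr0 divr_ge0 ?mulr_ge0 ?addr_ge0 // ltW.
have {}d0 : 0 < enorm (tsub x y) by rewrite lt_neqAle eq_sym d0 sqrtr_ge0.
set L := ln (expR 1 + (enorm (tsub x y))^-1).
have L1 : 1 <= L by rewrite ln_expR1D_ge1 // invr_ge0 ltW.
have hv := dyadic_level_le_ln d0 (dcube_enorm_sqr hx hy).
have hgc : g x - g y <= `|c| / L.
  apply: le_trans (ler_norm _) (le_trans (hg x y) _).
  by rewrite ler_pM2r ?invr_gt0 ?(lt_le_trans ltr01 L1) // ler_norm.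
have hv' : v%:R * ln 4 <= (2 + ln n%:R) * L.
  by rewrite mulrDl addrC (le_trans hv) // -/L lerD2r ler_peMr.
rewrite ler_pdivlMr // mulrAC.
apply: le_trans (_ : _ <= `|c| / L * (v%:R * ln 4)) _.
  by rewrite [leLHS]mulrC; apply: ler_wpM2r hgc; rewrite mulr_ge0 // ltW.
have cL : 0 <= `|c| / L by rewrite divr_ge0 // (le_trans ler01).
apply: le_trans (ler_wpM2l cL hv') _.
by rewrite mulrCA divfK ?gt_eqF ?(lt_le_trans ltr01 L1) // mulrC.
Qed.

Lemma Clog_ubound n (g : n.-tuple R -> R) :
  Clog g -> exists G, forall y, g y <= G.
Proof.
case=> c [g0 [_ hg]]; exists (`|g0| + `|c|) => y.
have L1 : 1 <= ln (expR 1 + enorm y) by rewrite ln_expR1D_ge1 // sqrtr_ge0.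
have hc : c / ln (expR 1 + enorm y) <= `|c|.
  rewrite ler_pdivrMr ?(lt_le_trans ltr01 L1) //.
  by rewrite (le_trans (ler_norm c)) // ler_peMr.
have := le_trans (ler_norm _) (le_trans (hg y) hc).
have := ler_norm g0; lra.
Qed.

End log_Hoelder.

Section variable_exponent_norms.
Variables (R : realType) (n : nat).
Implicit Types (p q f g h : n.-tuple R -> R).

Lemma pnorm_ge0 p f : (0 <= pnorm p f)%E.
Proof. by apply: le_ereal_inf_tmp => _ [l [l0 _] <-]; rewrite lee_fin ltW. Qed.

Lemma lqLp_inner_ge0 p q f mu : (0 <= lqLp_inner p q f mu)%E.
Proof. by apply: le_ereal_inf_tmp => _ [l [l0 _] <-]; rewrite lee_fin ltW. Qed.

Lemma lqLp_norm_ge0 p q (f : nat -> n.-tuple R -> R) v0 :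
  (0 <= lqLp_norm p q f v0)%E.
Proof. by apply: le_ereal_inf_tmp => _ [l [l0 _] <-]; rewrite lee_fin ltW. Qed.

Lemma lqLp_inner_le_series p q (f : nat -> n.-tuple R -> R) mu v0 v :
  (v0 <= v)%N ->
  (lqLp_inner p q (f v) mu <= \sum_(v0 <= w <oo) lqLp_inner p q (f w) mu)%E.
Proof.
move=> v0v; have u0 w : (0 <= lqLp_inner p q (f w) mu)%E := lqLp_inner_ge0 p q (f w) mu.
apply: le_trans (nneseries_lim_ge v.+1 (fun w _ _ => u0 w)).
by rewrite big_nat_recr //= leeDr // sume_ge0 // => w _; exact: lqLp_inner_ge0.
Qed.

Lemma le_pnorm p g h (D : R) : 0 < D -> (forall y, 0 <= p y) ->
  (forall y, `|g y| <= D * `|h y|) -> (pnorm p g <= D%:E * pnorm p h)%E.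
Proof.
move=> D0 p0 gh; rewrite -lee_pdivrMl //.
apply: le_ereal_inf_tmp => _ [l [l0 hl] <-]; rewrite lee_pdivrMl // -EFinM.
have Dl0 : 0 < D * l by rewrite mulr_gt0.
apply: ereal_inf_lbound; exists (D * l) => //; split => //.
apply: le_trans hl; apply: le_iint => y; first by rewrite lee_fin powR_ge0.
rewrite lee_fin ge0_ler_powR ?nnegrE //.
rewrite !normrM !normfV (gtr0_norm Dl0) (gtr0_norm l0) ler_pdivrMr //.
by rewrite (le_trans (gh y)) // mulrCA divfK ?gt_eqF.
Qed.

Lemma pnorm_le_lqLp_norm p q (f : nat -> n.-tuple R -> R) v0 v (Q : R) :
  (v0 <= v)%N -> (forall y, 0 <= p y) -> (forall y, 0 <= q y) ->
  (forall y, (q y)^-1 <= Q) ->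
  (pnorm p (f v) <= (2 `^ Q)%:E * lqLp_norm p q f v0)%E.
Proof.
move=> v0v p0 q0 qQ; have K0 : 0 < 2 `^ Q by rewrite powR_gt0.
rewrite -lee_pdivrMl //.
apply: le_ereal_inf_tmp => _ [mu [mu0 hs] <-]; rewrite lee_pdivrMl // -EFinM.
(* The level-[v] term of a series bounded by 1 is below 2, so it has an
   admissible [l < 2], for which [l `^ (q y)^-1 <= 2 `^ Q]. *)
have : (lqLp_inner p q (f v) mu < 2%:E)%E.
  apply: le_lt_trans (le_trans (lqLp_inner_le_series _ _ _ _ v0v) hs) _.
  by rewrite lte_fin ltr1n.
case/ereal_inf_lt => _ [l [l0 hl] <-]; rewrite lte_fin => l2.
apply: ereal_inf_lbound; exists (2 `^ Q * mu) => //; split; first exact: mulr_gt0.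
apply: le_trans hl; apply: le_iint => y; first by rewrite lee_fin powR_ge0.
rewrite lee_fin ge0_ler_powR ?nnegrE //.
have lq : l `^ (q y)^-1 <= 2 `^ Q.
  apply: (@le_trans _ _ (2 `^ (q y)^-1)).
    by apply: ge0_ler_powR; rewrite ?nnegrE ?invr_ge0 ?(ltW l0) ?(ltW l2).
  by apply: ler_powR; rewrite ?ler1n.
have lq0 : 0 < l `^ (q y)^-1 by rewrite powR_gt0.
rewrite !normrM ler_wpM2l // !normfV lef_pV2 ?posrE ?normr_gt0 ?mulf_neq0 ?gt_eqF //.
by rewrite !gtr0_norm ?mulr_gt0 // mulrC ler_pM2r.
Qed.

Lemma pnorm_indic_dcube_gt0 p (r : R) j (k : n.-tuple int) :
  0 < r -> (forall y, r <= p y) -> (0 < pnorm p (\1_(dcube j k)))%E.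
Proof.
move=> r0 rp; have vol0 := dvol_gt0 R n j.
apply: lt_le_trans (_ : (Num.min 1 (dvol R n j `^ r^-1))%:E <= _)%E.
  by rewrite lte_fin lt_min ltr01 powR_gt0.
apply: le_ereal_inf_tmp => _ [l [l0 hl] <-]; rewrite lee_fin ge_min.
have [//|l1] := lerP 1 l; apply/orP; right.
have il1 : 1 <= l^-1 by rewrite invf_ge1 // ltW.
have : l^-1 `^ r * dvol R n j <= 1.
  rewrite -lee_fin -(iint_indic_dcube j k) ?powR_ge0 //; apply: le_trans hl.
  apply: le_iint => y; first by rewrite lee_fin mulr_ge0 ?powR_ge0 // indicE ler0n.
  rewrite lee_fin indicE; case: (boolP (y \in dcube j k)) => _; last first.
    by rewrite mulr0 powR_ge0.
  by rewrite mulr1 div1r ger0_norm ?invr_ge0 ?(ltW l0) // ler_powR.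
rewrite -powR_inv1 ?(ltW l0) // -powRrM mulN1r powRN.
rewrite ler_pdivrMl ?powR_gt0 // mulr1 => vol_le.
have : dvol R n j `^ r^-1 <= (l `^ r) `^ r^-1.
  by apply: ge0_ler_powR; rewrite ?nnegrE ?invr_ge0 ?powR_ge0 ?(ltW r0) ?(ltW vol0).
by rewrite -powRrM mulfV ?gt_eqF // powRr1 // ltW.
Qed.

End variable_exponent_norms.

Section Besov_sequence_space.
Variables (R : realType) (n : nat).
Implicit Types (alpha tau : n.-tuple R -> R) (lam : cseq R n).

Lemma cabs_ge0 (z : R[i]) : 0 <= cabs z.
Proof. by case: z => a b; exact: sqrtr_ge0. Qed.

Lemma cabs_real_complexM (a : R) (z : R[i]) :
  0 <= a -> cabs (real_complex R a * z) = a * cabs z.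
Proof.
move=> a0; rewrite /cabs ComplexField.Normc.normcM; congr (_ * _).
by rewrite /ComplexField.Normc.normc /= expr0n /= addr0 sqrtr_sqr ger0_norm.
Qed.

Definition bweight alpha tau (v : nat) (y : n.-tuple R) : R :=
  dvol R n v `^ (- tau y) * 2 `^ (v%:R * (alpha y + n%:R / 2)).

Lemma bweightE alpha tau v y : bweight alpha tau v y =
  2 `^ (v%:R * n%:R * tau y + v%:R * (alpha y + n%:R / 2)).
Proof.
rewrite /bweight powRD ?pnatr_eq0 ?implybT //; congr (_ * _).
rewrite /dvol -invr_expz exprVn -exprM -powR_mulrn ?ler0n // -powRN -powRrM.
by rewrite natrM mulrN mulNr opprK.
Qed.

Lemma bweight_gt0 alpha tau v y : 0 < bweight alpha tau v y.
Proof. by rewrite bweightE powR_gt0. Qed.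

Lemma bfun_dcube alpha tau lam (v : nat) k y : dcube v k y ->
  bfun alpha tau lam v k v y = bweight alpha tau v y * cabs (lam v k).
Proof.
move=> hy; rewrite /bfun indicE mem_set // mulr1 -mulrA; congr (_ * _).
rewrite -(fsbig_widen [set k]) //; last first.
  move=> k' [_ /= kk']; rewrite /= indicE memNset ?mulr0 // => hk'.
  by apply: kk'; exact: dcube_uniq hk' hy.
rewrite fsbig_set1 indicE mem_set // -mulrA.
by rewrite (_ : real_complex R 1%:R = 1) // mulr1 cabs_real_complexM // powR_ge0.
Qed.

Lemma bweight_le_dcube alpha tau : Clog_loc alpha -> Clog_loc tau ->
  exists C, 0 < C /\ forall (v : nat) k x y, dcube v k x -> dcube v k y ->
    bweight alpha tau v x <= C * bweight alpha tau v y.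
Proof.
move=> /Clog_loc_dcube[Ca hCa] /Clog_loc_dcube[Ct hCt].
exists (2 `^ (n%:R * Ct + Ca)); split=> [|v k x y hx hy]; first exact: powR_gt0.
rewrite !bweightE -powRD ?pnatr_eq0 ?implybT // ler_powR ?ler1n //.
have := ler_wpM2l (ler0n _ n) (hCt _ _ _ _ hx hy); have := hCa _ _ _ _ hx hy.
rewrite !mulrBr; lra.
Qed.

End Besov_sequence_space.

Section coefficient_bound.
Variables (R : realType) (n : nat) (alpha tau p q : n.-tuple R -> R).

Lemma bweightV (v : nat) y : (bweight alpha tau v y)^-1 =
  2 `^ (- (v%:R * (alpha y + n%:R / 2))) * dvol R n v `^ (tau y).
Proof. by rewrite /bweight invfM powRN invrK -powRN mulrC. Qed.

Lemma lqLp_norm_le_bnorm lam (v : nat) k :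
  (lqLp_norm p q (bfun alpha tau lam v k) v <= bnorm alpha tau p q lam)%E.
Proof. by apply: ereal_sup_ubound; exists (v%:Z, k). Qed.

Lemma pnorm_indic_dcube_le_bnorm lam (C Q : R) (v : nat) k x :
  (forall y, 0 <= p y) -> (forall y, 0 <= q y) -> (forall y, (q y)^-1 <= Q) ->
  0 < C -> (forall y, dcube v k y -> bweight alpha tau v x <= C * bweight alpha tau v y) ->
  0 < cabs (lam v k) ->
  (pnorm p (\1_(dcube v k)) <=
     (C / (cabs (lam v k) * bweight alpha tau v x) * 2 `^ Q)%:E
     * bnorm alpha tau p q lam)%E.
Proof.
move=> p0 q0 qQ C0 hC a0; set a := cabs (lam v k); set wx := bweight alpha tau v x.
have wx0 : 0 < wx := bweight_gt0 alpha tau v x.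
have D0 : 0 < C / (a * wx) := divr_gt0 C0 (mulr_gt0 a0 wx0).
have hind y : `|\1_(dcube v k) y| <= C / (a * wx) * `|bfun alpha tau lam v k v y|.
  rewrite indicE; case: (boolP (y \in dcube v k)) => [/set_mem hy|_]; last first.
    by rewrite normr0 mulr_ge0 ?normr_ge0 ?ltW.
  have wy0 := bweight_gt0 alpha tau v y.
  rewrite normr1 bfun_dcube // -/a ger0_norm ?mulr_ge0 ?powR_ge0 ?(ltW a0) //.
  rewrite (_ : _ * _ = C * bweight alpha tau v y / wx); last by field; rewrite !gt_eqF.
  by rewrite ler_pdivlMr // mul1r hC.
apply: le_trans (le_pnorm D0 p0 hind) _.
rewrite [in leRHS]EFinM -muleA; apply: lee_wpmul2l; first by rewrite lee_fin ltW.
apply: le_trans (pnorm_le_lqLp_norm _ (leqnn v) p0 q0 qQ) _.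
by apply: lee_wpmul2l; rewrite ?lee_fin ?powR_ge0 ?lqLp_norm_le_bnorm.
Qed.

End coefficient_bound.

Theorem lemma3p9 (R : realType) (n : nat) (alpha tau p q : n.-tuple R -> R) :
  Clog_loc alpha -> Clog_loc tau -> (0 <= essinf tau)%E ->
  P0log p -> P0log q -> (0 < esssup q)%E -> (esssup q < +oo)%E ->
  exists c : R, 0 < c /\
    forall lam : cseq R n, (bnorm alpha tau p q lam < +oo)%E ->
    forall (v : nat) (m : n.-tuple int) (x : n.-tuple R),
      dcube v%:Z m x ->
      cabs (lam v m) <=
        c * (2 : R) `^ (- (v%:R * (alpha x + n%:R / 2)))
          * (@dvol R n v%:Z) `^ (tau x)
          * fine (bnorm alpha tau p q lam)
          * (fine (pnorm p (\1_(@dcube R n v%:Z m))))^-1.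
Proof.
move=> ha ht _ [[_ [p0 _]] /Clog_ubound[G hG]] [[_ [q0 _]] /Clog_ubound[Q hQ]] _ _.
have [C [C0 hC]] := bweight_le_dcube ha ht.
exists (C * 2 `^ Q); split=> [|lam Bfin v k x hx]; first by rewrite mulr_gt0 ?powR_gt0.
rewrite -(mulrA (C * 2 `^ Q)) -bweightV.
set a := cabs (lam v k); set wx := bweight alpha tau v x.
set B := bnorm _ _ _ _ lam; set Ne := pnorm _ _.
have B0 : (0 <= B)%E := le_trans (lqLp_norm_ge0 _ _ _ _) (lqLp_norm_le_bnorm _ _ _ _ lam v k).
have wx0 : 0 < wx := bweight_gt0 alpha tau v x.
have [a0|a0] := eqVneq a 0.
  by rewrite a0 !mulr_ge0 ?invr_ge0 ?fine_ge0 ?pnorm_ge0 ?powR_ge0 ?(ltW C0) ?(ltW wx0).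
have {}a0 : 0 < a by rewrite lt_neqAle eq_sym a0 cabs_ge0.
have G0 : 0 < G by apply: lt_le_trans (hG x); rewrite invr_gt0.
have Ne0 : (0 < Ne)%E.
  apply: (@pnorm_indic_dcube_gt0 _ _ _ G^-1) => [|y]; first by rewrite invr_gt0.
  by rewrite -[p y]invrK lef_pV2 ?posrE ?invr_gt0.
have := pnorm_indic_dcube_le_bnorm (fun y => ltW (p0 y)) (fun y => ltW (q0 y)) hQ
  C0 (hC _ _ _ ^~ hx) a0.
have BE : B = (fine B)%:E by rewrite fineK // ge0_fin_numE.
rewrite -/Ne -/B BE -EFinM => NeB.
have NeE : Ne = (fine Ne)%:E.
  by rewrite fineK // ge0_fin_numE ?ltW // (le_lt_trans NeB) ?ltry.
move: Ne0 NeB; rewrite NeE lte_fin lee_fin => N0 NeB.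
rewrite ler_pdivlMr // (_ : _ * fine B = a * (C / (a * wx) * 2 `^ Q * fine B)).
  by rewrite ler_pM2l.
by field; rewrite !gt_eqF.
Qed.
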